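(* Let $h\colon\{0,1\}^k\to\{0,1\}$ be a partial function, and let $\mathcal D_0,\mathcal D_1,\mathcal D_2$ be probability distributions over $h^{-1}(0)$, $h^{-1}(1)$, and $h^{-1}(0)\cup h^{-1}(1)$ respectively. Then for every $0<\varepsilon\le 1/10$ there exists a conjunction $C\colon\{0,1\}^k\to\{0,1\}$ of width $\mathsf{WAPP}_\varepsilon(h)$ such that $C(\mathcal D_0)\le\delta\cdot C(\mathcal D_1)$, $C(\mathcal D_2)\le(1+\delta)\cdot C(\mathcal D_1)$, and $C(\mathcal D_1)>0$, where $\delta=2\sqrt{\varepsilon}$.
   Context: A conjunction is an AND of literals; its width is its number of literals. For a conjunction $C$ and distribution $\mathcal D$, $C(\mathcal D)=\Pr_{x\sim\mathcal D}[C(x)=1]$. A randomized decision tree is a probability distribution over deterministic decision trees; its cost is the maximum depth of a tree in its support. $\mathsf{WAPP}_\varepsilon(h)$ is the minimum cost of a randomized decision tree with outputs in $\{0,1\}$ such that for some $t>0$, on every $x$ with $h(x)=1$ the probability of outputting $1$ lies in $[(1-\varepsilon)t,t]$, and on every $x$ with $h(x)=0$ it lies in $[0,\varepsilon t]$. *)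

From HB Require Import structures.
From mathcomp Require Import all_boot all_order all_algebra.
From mathcomp Require Import reals.
Set Implicit Arguments. Unset Strict Implicit. Unset Printing Implicit Defensive.
Import Order.TTheory GRing.Theory Num.Theory.
Local Open Scope ring_scope.

Definition input (k : nat) := {ffun 'I_k -> bool}.

Inductive dtree (k : nat) : Type :=
| Leaf of bool
| Node of 'I_k & dtree k & dtree k.

Fixpoint dt_eval k (t : dtree k) (x : input k) : bool :=
  match t with
  | Leaf b => b
  | Node i t0 t1 => if x i then dt_eval t1 x else dt_eval t0 x
  end.

Fixpoint dt_depth k (t : dtree k) : nat :=
  match t with
  | Leaf _ => 0
  | Node _ t0 t1 => (maxn (dt_depth t0) (dt_depth t1)).+1
  end.

(* A randomized decision tree: a finitely supported probability distribution
   over deterministic trees, given as a list of (weight, tree) pairs. *)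
Definition rdtree (R : realType) (k : nat) := seq (R * dtree k).

Definition rdt_wf (R : realType) k (T : rdtree R k) : Prop :=
  all (fun p => 0 <= p.1) T /\ \sum_(p <- T) p.1 = 1.

Definition rdt_cost (R : realType) k (T : rdtree R k) : nat :=
  \max_(p <- T | p.1 != 0) dt_depth p.2.

Definition rdt_prob1 (R : realType) k (T : rdtree R k) (x : input k) : R :=
  \sum_(p <- T) p.1 * (dt_eval p.2 x)%:R.

(* Partial functions h : {0,1}^k -> {0,1}: None = undefined. *)
Definition pfun k := input k -> option bool.

Definition wapp_alg (R : realType) k (eps : R) (h : pfun k) (T : rdtree R k) : Prop :=
  rdt_wf T /\
  exists t : R, 0 < t /\
    (forall x, h x = Some true -> (1 - eps) * t <= rdt_prob1 T x <= t) /\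
    (forall x, h x = Some false -> 0 <= rdt_prob1 T x <= eps * t).

Definition is_WAPP (R : realType) k (eps : R) (h : pfun k) (d : nat) : Prop :=
  (exists T : rdtree R k, wapp_alg eps h T /\ rdt_cost T = d) /\
  (forall T : rdtree R k, wapp_alg eps h T -> (d <= rdt_cost T)%N).

Definition distr_on (R : realType) k (D : input k -> R) (S : input k -> bool) : Prop :=
  (forall x, 0 <= D x) /\ \sum_x D x = 1 /\ (forall x, D x != 0 -> S x).

(* Conjunctions: a set of literals (i, b) meaning "x_i = b"; width = #literals *)
Definition conj_eval k (C : {set 'I_k * bool}) (x : input k) : bool :=
  [forall l in C, x l.1 == l.2].

Definition conj_width k (C : {set 'I_k * bool}) : nat := #|C|.

Definition conj_prob (R : realType) k (C : {set 'I_k * bool}) (D : input k -> R) : R :=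
  \sum_(x | conj_eval C x) D x.

From HB Require Import structures.
From mathcomp Require Import all_boot all_order all_algebra.
From mathcomp Require Import reals.
From mathcomp Require Import ring lra.
Set Implicit Arguments.
Unset Strict Implicit.
Unset Printing Implicit Defensive.

Import Order.TTheory GRing.Theory Num.Theory.
Local Open Scope ring_scope.

(* A deterministic tree of depth at most d accepts exactly on the disjoint
   union of its accepting paths, each a conjunction of width at most d. Hence
   for any signed weighting F of the inputs, the F-mass accepted by a
   randomized tree of cost d is a convex combination of F-masses of
   conjunctions of width at most d, so if it is negative some such conjunction
   has negative F-mass. For F = (1 + δ) D0 + δ D2 - δ (1 + δ) D1 the WAPP
   guarantees make the accepted mass at most
   t ((1 + δ) ε + δ - δ (1 + δ) (1 - ε)) = - t ε (3 - 4 √ε - 4 ε) < 0, and a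
   conjunction of negative F-mass satisfies the three required bounds. *)

Section AcceptingPaths.
Variable k : nat.

Fixpoint dt_accept_paths (t : dtree k) : seq {set 'I_k * bool} :=
  match t with
  | Leaf b => if b then [:: set0] else [::]
  | Node i t0 t1 => [seq (i, false) |: C | C <- dt_accept_paths t0]
                    ++ [seq (i, true) |: C | C <- dt_accept_paths t1]
  end.

Lemma conj_eval_set0 (x : input k) : conj_eval set0 x.
Proof. by apply/forallP => l; rewrite in_set0. Qed.

Lemma conj_eval_setU1 (l : 'I_k * bool) C x :
  conj_eval (l |: C) x = (x l.1 == l.2) && conj_eval C x.
Proof.
apply/forallP/andP => [lCx | [lx Cx] l'].
  split; first by have := lCx l; rewrite setU11.
  by apply/forallP => l'; apply/implyP => l'C; have := lCx l'; rewrite setU1r.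
by apply/implyP => /setU1P[-> | l'C] //; exact: (implyP (forallP Cx l')).
Qed.

Lemma dt_eval_accept_paths (R : nzRingType) (t : dtree k) x :
  (dt_eval t x)%:R = \sum_(C <- dt_accept_paths t) (conj_eval C x)%:R :> R.
Proof.
elim: t => [[] | i t0 IH0 t1 IH1] /=.
- by rewrite big_seq1 conj_eval_set0.
- by rewrite big_nil.
have branch b s : \sum_(C <- s) (conj_eval ((i, b) |: C) x)%:R =
    if x i == b then \sum_(C <- s) (conj_eval C x)%:R else 0 :> R.
  case: eqP => [xib | /eqP xib].
    by apply: eq_bigr => C _; rewrite conj_eval_setU1 xib eqxx.
  by rewrite big1 // => C _; rewrite conj_eval_setU1 (negbTE xib).
rewrite big_cat !big_map !branch -IH0 -IH1.
by case: (x i); rewrite /= ?add0r ?addr0.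
Qed.

Lemma card_setU1_le (l : 'I_k * bool) (C : {set 'I_k * bool}) :
  (#|l |: C| <= #|C|.+1)%N.
Proof. by rewrite cardsU1 -add1n leq_add2r leq_b1. Qed.

Lemma dt_accept_paths_width (t : dtree k) C :
  C \in dt_accept_paths t -> (#|C| <= dt_depth t)%N.
Proof.
elim: t C => [[] | i t0 IH0 t1 IH1] C //=.
  by rewrite inE => /eqP ->; rewrite cards0.
rewrite mem_cat => /orP[] /mapP[C' C'P ->].
all: rewrite (leq_trans (card_setU1_le _ _)) // ltnS.
  by rewrite leq_max IH0.
by rewrite leq_max IH1 ?orbT.
Qed.

End AcceptingPaths.

Section Averaging.
Variables (R : realType) (k : nat).

Definition expect (D f : input k -> R) : R := \sum_x D x * f x.

Lemma conj_probE C (D : input k -> R) :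
  conj_prob C D = expect D (fun x => (conj_eval C x)%:R).
Proof.
rewrite /conj_prob /expect big_mkcond; apply: eq_bigr => x _.
by case: conj_eval; rewrite ?mulr1 ?mulr0.
Qed.

Lemma conj_prob_ge0 C (D : input k -> R) :
  (forall x, 0 <= D x) -> 0 <= conj_prob C D.
Proof. by move=> D_ge0; apply: sumr_ge0. Qed.

Lemma expect_rdt_prob1 (T : rdtree R k) (D : input k -> R) :
  expect D (rdt_prob1 T) =
  \sum_(p <- T) p.1 * \sum_(C <- dt_accept_paths p.2) conj_prob C D.
Proof.
rewrite /expect /rdt_prob1; under eq_bigr do rewrite big_distrr.
rewrite exchange_big; apply: eq_bigr => p _ /=.
under eq_bigr do rewrite (dt_eval_accept_paths R) mulrCA big_distrr.
rewrite -big_distrr exchange_big /=; congr (_ * _); apply: eq_bigr => C _.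
by rewrite conj_probE.
Qed.

Lemma expect_rdt_prob1_ge0 (T : rdtree R k) (D : input k -> R) d :
  all (fun p => 0 <= p.1) T -> (rdt_cost T <= d)%N ->
  (forall C : {set 'I_k * bool}, (#|C| <= d)%N -> 0 <= conj_prob C D) ->
  0 <= expect D (rdt_prob1 T).
Proof.
move=> + + D_C_ge0; rewrite expect_rdt_prob1 /rdt_cost.
elim: T => [_ _ | p T IH] /=; first by rewrite big_nil.
case/andP=> p_ge0 T_ge0; rewrite !big_cons.
have [-> | p_neq0] := eqVneq p.1 0; first by rewrite mul0r add0r; exact: IH.
rewrite geq_max => /andP[p_depth T_cost].
rewrite addr_ge0 ?IH // mulr_ge0 // big_seq sumr_ge0 // => C CP.
by rewrite D_C_ge0 // (leq_trans (dt_accept_paths_width CP)).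
Qed.

Lemma exists_conj_prob_lt0 (T : rdtree R k) (D : input k -> R) d :
  all (fun p => 0 <= p.1) T -> (rdt_cost T <= d)%N ->
  expect D (rdt_prob1 T) < 0 ->
  exists C : {set 'I_k * bool}, (#|C| <= d)%N /\ conj_prob C D < 0.
Proof.
move=> T_ge0 T_cost.
have [/existsP[C /andP[C_width C_lt0]] _ | noC] :=
  boolP [exists C : {set 'I_k * bool}, (#|C| <= d)%N && (conj_prob C D < 0)].
  by exists C.
rewrite ltNge (expect_rdt_prob1_ge0 T_ge0 T_cost) // => C C_width.
rewrite leNgt; apply: contraNN noC => C_lt0.
by apply/existsP; exists C; apply/andP.
Qed.

Lemma expect_bounds (D : input k -> R) (S : input k -> bool) f a b :
  distr_on D S -> (forall x, S x -> a <= f x <= b) -> a <= expect D f <= b.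
Proof.
move=> [D_ge0 [D_sum1 D_supp]] f_bounds.
rewrite -[a]mul1r -[b]mul1r -D_sum1 !big_distrl /=.
apply/andP; split; apply: ler_sum => x _;
  have [-> | /D_supp /f_bounds /andP[fa fb]] := eqVneq (D x) 0;
  by rewrite ?mul0r // ler_wpM2l.
Qed.

End Averaging.

Section Separation.
Variables (R : realType) (k : nat) (delta : R) (D0 D1 D2 : input k -> R).

Definition sep_weight (x : input k) : R :=
  (1 + delta) * D0 x + delta * D2 x - delta * (1 + delta) * D1 x.

Lemma expect_sep_weight f :
  expect sep_weight f =
  (1 + delta) * expect D0 f + delta * expect D2 f
    - delta * (1 + delta) * expect D1 f.
Proof.
rewrite /expect !big_distrr -big_split -sumrB /=.
by apply: eq_bigr => x _; rewrite /sep_weight; ring.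
Qed.

Lemma sep_weight_lt0_bounds (a0 a1 a2 : R) :
  0 < delta -> 0 <= a0 -> 0 <= a2 ->
  (1 + delta) * a0 + delta * a2 - delta * (1 + delta) * a1 < 0 ->
  [/\ a0 <= delta * a1, a2 <= (1 + delta) * a1 & 0 < a1].
Proof. by move=> delta_gt0 a0_ge0 a2_ge0 neg; split; nra. Qed.

End Separation.

Lemma wapp_gap (R : realType) (eps delta : R) :
  0 < delta -> delta ^+ 2 = 4 * eps -> eps <= 1 / 10 ->
  (1 + delta) * eps + delta < delta * (1 + delta) * (1 - eps).
Proof.
move=> delta_gt0 delta_sq eps_small.
have eps_gt0 : 0 < eps by nra.
have delta_lt1 : delta < 1 by nra.
have margin : 0 < eps * (3 - 2 * delta - 4 * eps) by rewrite mulr_gt0 //; lra.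
nra.
Qed.

Lemma wapp_expect_sep_weight_lt0 (R : realType) k (h : pfun k)
    (D0 D1 D2 : input k -> R) (eps delta : R) (T : rdtree R k) :
  distr_on D0 (fun x => h x == Some false) ->
  distr_on D1 (fun x => h x == Some true) ->
  distr_on D2 (fun x => h x != None) ->
  0 < delta -> delta ^+ 2 = 4 * eps -> eps <= 1 / 10 ->
  wapp_alg eps h T -> expect (sep_weight delta D0 D1 D2) (rdt_prob1 T) < 0.
Proof.
move=> hD0 hD1 hD2 delta_gt0 delta_sq eps_small [_ [t [t_gt0 [acc1 acc0]]]].
have eps_gt0 : 0 < eps by nra.
have acc_le_t x : h x != None -> 0 <= rdt_prob1 T x <= t.
  case hx: (h x) => [[] | ] // _.
    have /andP[lb ->] := acc1 x hx.
    by rewrite (le_trans _ lb) // mulr_ge0 ?ltW //; lra.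
  have /andP[-> ub] := acc0 x hx.
  by rewrite (le_trans ub) // ler_piMl ?ltW //; lra.
have /andP[_ E0] := expect_bounds hD0 (fun x hx => acc0 x (eqP hx)).
have /andP[E1 _] := expect_bounds hD1 (fun x hx => acc1 x (eqP hx)).
have /andP[_ E2] := expect_bounds hD2 acc_le_t.
have gap := wapp_gap delta_gt0 delta_sq eps_small.
rewrite expect_sep_weight; nra.
Qed.

Theorem fact3p1 (R : realType) (k : nat) (h : pfun k)
  (D0 D1 D2 : input k -> R)
  (hD0 : distr_on D0 (fun x => h x == Some false))
  (hD1 : distr_on D1 (fun x => h x == Some true))
  (hD2 : distr_on D2 (fun x => h x != None))
  (eps : R) (heps0 : 0 < eps) (heps1 : eps <= 1 / 10)
  (d : nat) (hd : is_WAPP eps h d) :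
  let delta := 2 * Num.sqrt eps in
  exists C : {set 'I_k * bool},
    (conj_width C <= d)%N /\
    conj_prob C D0 <= delta * conj_prob C D1 /\
    conj_prob C D2 <= (1 + delta) * conj_prob C D1 /\
    0 < conj_prob C D1.
Proof.
move=> delta.
have delta_gt0 : 0 < delta by rewrite mulr_gt0 ?sqrtr_gt0.
have delta_sq : delta ^+ 2 = 4 * eps by rewrite exprMn sqr_sqrtr ?ltW // -natrX.
have [[T [hT <-]] _] := hd.
have [C [C_width C_lt0]] := exists_conj_prob_lt0 hT.1.1 (leqnn _)
  (wapp_expect_sep_weight_lt0 hD0 hD1 hD2 delta_gt0 delta_sq heps1 hT).
rewrite conj_probE expect_sep_weight -!conj_probE in C_lt0.
have [C_D0 C_D2 C_D1] := sep_weight_lt0_bounds delta_gt0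
  (conj_prob_ge0 C hD0.1) (conj_prob_ge0 C hD2.1) C_lt0.
by exists C.
Qed.
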